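(* For $m,n\in\mathbb{N}$ (positive integers) let \[ C_m^n:=\left|\left\{(i_1,\dots,i_m)\in\{1,\dots,n\}^m:\ \forall j\in\{1,\dots,m\}\ \exists j'\in\{1,\dots,m\},\ j'\neq j,\ i_j=i_{j'}\right\}\right|. \] Then $C_m^n\leq m!\left(\frac n2\right)^{\lfloor m/2\rfloor}$. *)

From mathcomp Require Import all_boot all_order all_algebra.
Set Implicit Arguments. Unset Strict Implicit. Unset Printing Implicit Defensive.
Import GRing.Theory Num.Theory.

(* C_m^n : number of maps i : {1..m} -> {1..n} (indices shifted to 0-based
   ordinals 'I_m, 'I_n) such that every value taken is taken at least twice:
   for all j there is j' <> j with i j = i j'. *)
Definition C (m n : nat) : nat :=
  #|[set i : {ffun 'I_m -> 'I_n} |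
      [forall j : 'I_m, exists j' : 'I_m, (j' != j) && (i j == i j')]]|.

From mathcomp Require Import all_boot all_order all_algebra.
From mathcomp Require Import ring lra.
Set Implicit Arguments. Unset Strict Implicit. Unset Printing Implicit Defensive.
Import Order.TTheory GRing.Theory Num.Theory.

(* Call a map repeated if each of its values is taken at least twice.  Split the
   repeated maps on k+2 points according to whether the restriction to the
   first k+1 points is still repeated.  If it is, the last value lies in the
   image of that restriction, which has at most (k+1)/2 elements.  If it is
   not, the last value is shared with exactly one other point, and deleting
   both points leaves a repeated map on k points, the pair being recovered
   from the partner (k+1 choices) and the common value (n choices).  Hence
     C_{k+2} <= (k+1) n C_k + floor((k+1)/2) C_{k+1},
   and m! (n/2)^floor(m/2) satisfies the reverse recurrence once n/2 >= 1/2. *)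

Section RepeatedMaps.
Variable n : nat.

Definition repeated k (f : {ffun 'I_k -> 'I_n}) : bool :=
  [forall j, exists j', (j' != j) && (f j == f j')].

Definition repeated_maps k := [set f : {ffun 'I_k -> 'I_n} | repeated f].

Definition drop_last k (f : {ffun 'I_k.+1 -> 'I_n}) : {ffun 'I_k -> 'I_n} :=
  [ffun j => f (lift ord_max j)].

Lemma double_card_codom_repeated k (f : {ffun 'I_k -> 'I_n}) :
  repeated f -> (#|codom f|.*2 <= k)%N.
Proof.
move=> /forallP f_rep; rewrite -mul2n mulnC.
apply: (@leq_trans (\sum_(i : 'I_k) 1)); last by rewrite sum1_card card_ord.
rewrite (partition_big f (mem (codom f))) /=; last by move=> i _; apply: codom_f.
rewrite -sum_nat_const; apply: leq_sum => v /codomP [j ->].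
have [j' /andP [j'_ne_j /eqP fj']] := existsP (f_rep j).
have <- : #|[set j; j']| = 2 by rewrite cards2 eq_sym j'_ne_j.
rewrite sum1_card.
apply: subset_leq_card; apply/subsetP => i; rewrite !inE => /orP [] /eqP ->;
  by rewrite unfold_in /= ?fj'; apply/eqnP.
Qed.

Lemma drop_last_max_inj k :
  injective (fun f : {ffun 'I_k.+1 -> 'I_n} => (drop_last f, f ord_max)).
Proof.
move=> f1 f2 [eq_drop eq_max]; apply/ffunP => i.
case: (unliftP ord_max i) => [j ->|->] //.
by have := congr1 (fun g : {ffun 'I_k -> 'I_n} => g j) eq_drop; rewrite !ffunE.
Qed.

Lemma card_repeated_drop_repeated k :
  (#|[set f in repeated_maps k.+1 | drop_last f \in repeated_maps k]|
    <= k./2 * #|repeated_maps k|)%N.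
Proof.
rewrite -(card_imset _ (@drop_last_max_inj k)).
pose P := [set p : {ffun 'I_k -> 'I_n} * 'I_n |
            (p.1 \in repeated_maps k) && (p.2 \in codom p.1)].
apply: (@leq_trans #|P|).
  apply: subset_leq_card; apply/subsetP => p /imsetP [f].
  rewrite !inE => /andP [/forallP /(_ ord_max) /existsP [j' /andP [j'_ne fj']]].
  move=> drop_rep ->; rewrite drop_rep /=.
  case: (unliftP ord_max j') j'_ne fj' => [j ->|->]; last by rewrite eqxx.
  by move=> _ /eqP ->; apply/codomP; exists j; rewrite ffunE.
have -> : #|P| = (\sum_(g in repeated_maps k) \sum_(v in codom g) 1)%N.
  by rewrite pair_big_dep /= -sum1_card; apply: eq_bigl => p; rewrite inE.
rewrite mulnC -sum_nat_const; apply: leq_sum => g; rewrite inE => g_rep.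
by rewrite sum1_card geq_half_double double_card_codom_repeated.
Qed.

Section LastPairedOnce.
Variable k : nat.
Implicit Type f : {ffun 'I_k.+2 -> 'I_n}.

Definition last_partner f : 'I_k.+1 :=
  odflt ord0 [pick j | f (lift ord_max j) == f ord_max].

Definition drop_last_pair f : {ffun 'I_k -> 'I_n} :=
  [ffun i => f (lift ord_max (lift (last_partner f) i))].

Definition last_paired_once :=
  [set f in repeated_maps k.+2 | drop_last f \notin repeated_maps k.+1].

Lemma last_partnerP f : f \in last_paired_once ->
  forall j, (f (lift ord_max j) == f ord_max) = (j == last_partner f).
Proof.
rewrite !inE => /andP [/forallP f_rep /forallPn [j0 /existsPn j0_single]].
have eq_j0 j : (f (lift ord_max j) == f (lift ord_max j0)) = (j == j0).
  apply/idP/eqP => [fj|->]; last exact: eqxx.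
  by apply/eqP; apply: contraNT (j0_single j) => j_ne; rewrite j_ne !ffunE eq_sym.
have f_j0 : f (lift ord_max j0) = f ord_max.
  have [j' /andP [j'_ne /eqP fj']] := existsP (f_rep (lift ord_max j0)).
  case: (unliftP ord_max j') j'_ne fj' => [j ->|-> //].
  by move=> j_ne /esym/eqP; rewrite eq_j0 => /eqP j_j0; rewrite j_j0 eqxx in j_ne.
have -> : last_partner f = j0.
  rewrite /last_partner; case: pickP => [j|/(_ j0)]; last by rewrite f_j0 eqxx.
  by rewrite -f_j0 eq_j0 => /eqP.
by move=> j; rewrite -f_j0 eq_j0.
Qed.

Lemma last_partner_eq f : f \in last_paired_once ->
  f (lift ord_max (last_partner f)) = f ord_max.
Proof. by move=> f_once; apply/eqP; rewrite last_partnerP. Qed.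

Lemma drop_last_pair_repeated f : f \in last_paired_once ->
  drop_last_pair f \in repeated_maps k.
Proof.
move=> f_once; have := f_once; rewrite !inE => /andP [/forallP f_rep _].
have f_ne_last i : f (lift ord_max (lift (last_partner f) i)) != f ord_max.
  by rewrite last_partnerP // eq_sym neq_lift.
apply/forallP => i.
have [b /andP [b_ne /eqP fb]] := existsP (f_rep (lift ord_max (lift (last_partner f) i))).
case: (unliftP ord_max b) b_ne fb => [b1 ->|-> _ fb]; last first.
  by have := f_ne_last i; rewrite fb eqxx.
case: (unliftP (last_partner f) b1) => [b2 ->|-> _ fb]; last first.
  by have := f_ne_last i; rewrite fb last_partner_eq // eqxx.
move=> b_ne fb; apply/existsP; exists b2; rewrite !ffunE fb eqxx andbT.
by apply: contra b_ne => /eqP ->.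
Qed.

Lemma last_paired_once_inj :
  {in last_paired_once &,
    injective (fun f => (last_partner f, f ord_max, drop_last_pair f))}.
Proof.
move=> f1 f2 f1_once f2_once [eq_p eq_max eq_drop]; apply/ffunP => i.
case: (unliftP ord_max i) => [i1 ->|->] //.
case: (unliftP (last_partner f1) i1) => [i2 ->|->].
  have := congr1 (fun g : {ffun 'I_k -> 'I_n} => g i2) eq_drop.
  by rewrite !ffunE -eq_p.
by rewrite last_partner_eq // eq_max eq_p last_partner_eq.
Qed.

Lemma card_last_paired_once :
  (#|last_paired_once| <= k.+1 * n * #|repeated_maps k|)%N.
Proof.
rewrite -(card_in_imset last_paired_once_inj).
apply: (@leq_trans #|setX (setX [set: 'I_k.+1] [set: 'I_n]) (repeated_maps k)|).
  apply: subset_leq_card; apply/subsetP => _ /imsetP [f f_once ->].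
  by have := drop_last_pair_repeated f_once; rewrite !inE.
by rewrite !cardsX !cardsT !card_ord.
Qed.

End LastPairedOnce.

Lemma card_repeated_maps_rec k :
  (#|repeated_maps k.+2| <=
     k.+1 * n * #|repeated_maps k| + k.+1./2 * #|repeated_maps k.+1|)%N.
Proof.
rewrite -(cardsID [set f | drop_last f \in repeated_maps k.+1]) addnC.
apply: leq_add.
  apply: leq_trans (card_last_paired_once k); apply: subset_leq_card.
  by apply/subsetP => f; rewrite !inE andbC.
apply: leq_trans (card_repeated_drop_repeated k.+1); apply: subset_leq_card.
by apply/subsetP => f; rewrite !inE.
Qed.

End RepeatedMaps.

Lemma CE m n : C m n = #|repeated_maps n m|. Proof. by []. Qed.

Local Open Scope ring_scope.

Definition fact_halfpow (R : numDomainType) (x : R) (m : nat) : R :=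
  m`!%:R * x ^+ m./2.

Lemma even_or_odd m : exists h, m = h.*2 \/ m = h.*2.+1.
Proof.
by exists m./2; rewrite -{1 3}(odd_double_half m); case: (odd m); [right|left].
Qed.

Lemma fact_halfpow_rec (R : realFieldType) (x : R) (m : nat) : 1 / 2 <= x ->
  m.+1%:R * (2 * x) * fact_halfpow x m + (m.+1./2)%:R * fact_halfpow x m.+1
    <= fact_halfpow x m.+2.
Proof.
move=> x_ge; have x_ge0 : 0 <= x by apply: le_trans x_ge; lra.
rewrite /fact_halfpow.
have [h [-> | ->]] := even_or_odd m; rewrite /= ?uphalf_double ?doubleK.
all: rewrite !factS !natrM exprS -!natr1 -mul2n !natrM.
all: set F := _`!%:R; set X := x ^+ h; set H : R := h%:R.
all: have F0 : 0 <= F by []; have X0 : 0 <= X by apply: exprn_ge0.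
all: have H0 : 0 <= H by []; rewrite -subr_ge0.
- rewrite [leRHS](_ : _ = (2 * H + 1) * F * X * H * (2 * x - 1)); last by ring.
  by rewrite !mulr_ge0 //; lra.
- rewrite [leRHS](_ : _ = (2 * H + 2) * (2 * H + 1) * F * x * X * H); last by ring.
  by rewrite !mulr_ge0 //; lra.
Qed.

Lemma card_repeated_maps0 n : (#|repeated_maps n 0| <= 1)%N.
Proof. by apply: leq_trans (max_card _) _; rewrite card_ffun !card_ord. Qed.

Lemma repeated_maps1 n : repeated_maps n 1 = set0.
Proof.
apply/setP => f; rewrite !inE; apply/negP => /forallP /(_ ord0) /existsP [j].
by rewrite (ord1 j) eqxx.
Qed.

Lemma C_le_fact_halfpow (R : realFieldType) (m n : nat) : (0 < n)%N ->
  (C m n)%:R <= fact_halfpow (n%:R / 2 : R) m.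
Proof.
move=> n_gt0; set x : R := n%:R / 2.
have x_ge : 1 / 2 <= x by rewrite ler_pM2r ?invr_gt0 // ler1n.
have nE : n%:R = 2 * x by rewrite /x mulrC divfK // pnatr_eq0.
suff [] : (C m n)%:R <= fact_halfpow x m /\
          (C m.+1 n)%:R <= fact_halfpow x m.+1 by [].
elim: m => [|m [IHm IHm1]].
  rewrite !CE repeated_maps1 cards0 mulr_ge0 ?exprn_ge0 //; last by lra.
  by rewrite /fact_halfpow expr0 mulr1 ler_nat card_repeated_maps0.
split=> //; apply: le_trans (fact_halfpow_rec m x_ge).
apply: le_trans (_ : (m.+1 * n * C m n + m.+1./2 * C m.+1 n)%:R <= _).
  by rewrite ler_nat !CE card_repeated_maps_rec.
by rewrite natrD !natrM nE lerD // ler_wpM2l // mulr_ge0 //; lra.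
Qed.

Theorem lemma5p5 (m n : nat) (hm : (0 < m)%N) (hn : (0 < n)%N) :
  ((C m n)%:R : rat) <= (m`!)%:R * ((n%:R / 2) ^+ (m./2)).
Proof. exact: C_le_fact_halfpow. Qed.
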